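(* Let $G=(V,E)$ be a finite, undirected, unweighted, connected graph with $n=|V|$ and let $S$ be its supergraph. The 2-Opt procedure on $S$ (described in the context) runs in time $O(n^4)$ when it searches for a Hamiltonian cycle of $S$ or for a Hamiltonian path of $S$ with a fixed starting vertex, and in time $O(n^5)$ when it searches for a Hamiltonian path of $S$ (trying every starting vertex).
   Context: $\mathrm{dist}(u,v)$ is the shortest-path distance in $G$; the supergraph $S$ is the complete weighted graph on $V=\{v_1,\dots,v_n\}$ with weights $w(u,v)=\mathrm{dist}(u,v)$. 2-Opt for cycles: start with the Hamiltonian cycle $(v_1,v_2,\dots,v_n,v_1)$, stored as a doubly linked list of edges. Repeat: scan pairs of cycle edges $(c_k,c_{k+1}),(c_j,c_{j+1})$ with $k<j$ in the current cyclic order $(c_1,\dots,c_n)$; at the first pair with $w(c_k,c_{k+1})+w(c_j,c_{j+1})>w(c_k,c_j)+w(c_{k+1},c_{j+1})$, replace these two edges by $(c_k,c_j)$ and $(c_{k+1},c_{j+1})$, reversing the segment between them, and restart the scan; stop when a full scan finds no such pair. 2-Opt for paths with fixed starting vertex $s$: the same procedure applied to the Hamiltonian path starting at $s$ followed by the remaining vertices in index order; for paths without fixed start, the fixed-start procedure is run for every starting vertex. Cost model (as assumed by the paper): initialization costs $O(n)$, and each weight comparison and each edge replacement/segment reversal in the linked list costs $O(1)$. *)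

From mathcomp Require Import all_boot.
Set Implicit Arguments. Unset Strict Implicit. Unset Printing Implicit Defensive.

Definition simple_graph (n : nat) (e : rel 'I_n) : Prop :=
  symmetric e /\ irreflexive e.

Definition connected_graph (n : nat) (e : rel 'I_n) : Prop :=
  forall u v : 'I_n, connect e u v.

(* dist e u v = length of a shortest path from u to v: the least k such that
   there is an e-path with k edges from u to v (returns n if there is none,
   which never happens for a connected graph). This is the weight of the
   edge {u,v} in the supergraph S. *)
Definition dist (n : nat) (e : rel 'I_n) (u v : 'I_n) : nat :=
  find (fun k => [exists p : k.-tuple 'I_n, path e u p && (last u p == v)])
       (iota 0 n.+1).

Section TwoOpt.
Variables (T : eqType) (w : T -> T -> nat) (x0 : T).
(* cyc = true : tour is a Hamiltonian cycle c_0 ... c_{m-1} c_0;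
   cyc = false: tour is a Hamiltonian path c_0 ... c_{m-1}.
   x0 is an irrelevant default for nth (all indices used are in range). *)

(* number of tour edges; edge number k joins positions k and succ_idx k *)
Definition nedges (cyc : bool) (c : seq T) : nat :=
  if cyc then size c else (size c).-1.

Definition succ_idx (cyc : bool) (c : seq T) (j : nat) : nat :=
  if cyc then j.+1 %% size c else j.+1.

Definition edge_pairs (E : nat) : seq (nat * nat) :=
  flatten [seq [seq (k, j) | j <- iota k.+1 (E - k.+1)] | k <- iota 0 E].

Definition improving (cyc : bool) (c : seq T) (p : nat * nat) : bool :=
  let k := p.1 in let j := p.2 in
  let v i := nth x0 c i in
  let j' := succ_idx cyc c j in
  w (v k) (v j) + w (v k.+1) (v j') < w (v k) (v k.+1) + w (v j) (v j').

(* the 2-Opt move: replace edges (c_k,c_{k+1}),(c_j,c_{j+1}) by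
   (c_k,c_j),(c_{k+1},c_{j+1}), reversing the segment c_{k+1} .. c_j *)
Definition two_opt_move (c : seq T) (k j : nat) : seq T :=
  take k.+1 c ++ rev (take (j - k) (drop k.+1 c)) ++ drop j.+1 c.

(* Returns [Some cost] if the procedure stops
   (a full scan finds no improving pair) within [fuel] replacements, where
   cost counts one unit per weight comparison and one unit per edge
   replacement/segment reversal; returns [None] if fuel runs out. *)
Fixpoint two_opt_run (cyc : bool) (fuel : nat) (c : seq T) : option nat :=
  let ps := edge_pairs (nedges cyc c) in
  let i := find (improving cyc c) ps in
  if i < size ps then
    match fuel with
    | 0 => None
    | f.+1 =>
        let p := nth (0, 0) ps i in
        (* i+1 comparisons, then 1 replacement *)
        option_map (addn i.+2) (two_opt_run cyc f (two_opt_move c p.1 p.2))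
    end
  else Some (size ps).

End TwoOpt.

(* Hamiltonian cycle: initial cycle (v_1, ..., v_n, v_1); initialization
   costs n. *)
Definition two_opt_cycle_cost (n : nat) (e : rel 'I_n) (x0 : 'I_n)
    (fuel : nat) : option nat :=
  option_map (addn n) (two_opt_run (dist e) x0 true fuel (enum 'I_n)).

(* Hamiltonian path with fixed start s: initial path s, then the remaining
   vertices in index order; initialization costs n. *)
Definition two_opt_path_cost (n : nat) (e : rel 'I_n) (x0 : 'I_n)
    (s : 'I_n) (fuel : nat) : option nat :=
  option_map (addn n)
    (two_opt_run (dist e) x0 false fuel (s :: [seq v <- enum 'I_n | v != s])).

Definition two_opt_path_all_cost (n : nat) (e : rel 'I_n) (x0 : 'I_n)
    (fuel : nat) : option nat :=
  foldr (fun s acc =>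
           match two_opt_path_cost e x0 s fuel, acc with
           | Some a, Some b => Some (a + b)
           | _, _ => None
           end) (Some 0) (enum 'I_n).

From mathcomp Require Import all_boot zify.

Set Implicit Arguments.
Unset Strict Implicit.
Unset Printing Implicit Defensive.

(* A 2-Opt move reverses a segment of the tour; by symmetry of the weights the
   reversed segment keeps its internal weight, so only the two exchanged edges
   change and an improving move strictly decreases the total tour weight.
   All distances are at most n + 1, so a tour on n vertices weighs at most
   n (n + 1): the procedure stops after O(n^2) moves, each found by a scan of
   at most n^2 edge pairs, hence in O(n^4) steps.  Trying the n starting
   vertices of a path multiplies this by n. *)

Lemma mem_edge_pairs E k j : (k, j) \in edge_pairs E -> k < j < E.
Proof.
case/flatten_mapP => k' /[!mem_iota] /andP[_ ltk'E].
by case/mapP => j' /[!mem_iota] lej' [-> ->]; lia.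
Qed.

Lemma size_edge_pairs E : size (edge_pairs E) <= E * E.
Proof.
rewrite size_flatten /shape -map_comp sumnE big_map.
apply: (@leq_trans (\sum_(k <- iota 0 E) E)).
  by apply: leq_sum => k _ /=; rewrite size_map size_iota leq_subr.
by rewrite big_const_seq count_predT size_iota iter_addn_0.
Qed.

Lemma nedges_le_size (T : eqType) cyc (c : seq T) : nedges cyc c <= size c.
Proof. by rewrite /nedges; case: cyc => //; exact: leq_pred. Qed.

Lemma edge_pair_lt_size (T : eqType) cyc (c : seq T) p :
  p \in edge_pairs (nedges cyc c) -> p.1 < p.2 < size c.
Proof.
case: p => k j /mem_edge_pairs /andP[ltkj ltjE] /=.
by rewrite ltkj (leq_trans ltjE) ?nedges_le_size.
Qed.

Lemma last_rev_belast (T : Type) (x : T) s : last (last x s) (rev (belast x s)) = x.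
Proof. by have := last_rcons x (rev s) x; rewrite -rev_cons [x :: s]lastI rev_rcons. Qed.

Lemma size_two_opt_move (T : eqType) (c : seq T) k j :
  k < j < size c -> size (two_opt_move c k j) = size c.
Proof.
move=> /andP[ltkj ltjc].
rewrite !size_cat size_rev !size_takel ?size_drop; lia.
Qed.

Lemma two_opt_move_rcons (T : eqType) (c : seq T) h k j :
  k < j < size c -> two_opt_move (rcons c h) k j = rcons (two_opt_move c k j) h.
Proof.
move=> /andP[ltkj ltjc].
rewrite /two_opt_move -cats1 takel_cat; last lia.
rewrite cats1 !drop_rcons; try lia.
by rewrite -cats1 takel_cat ?size_drop ?cats1 ?rcons_cat //; lia.
Qed.

Section TwoOptWeight.
Variables (T : eqType) (w : T -> T -> nat) (x0 : T).

Definition walk_weight (x : T) (s : seq T) : nat := sumn (pairmap w x s).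

Definition seq_weight (s : seq T) : nat := walk_weight (head x0 s) (behead s).

Definition closed_tour (cyc : bool) (c : seq T) : seq T :=
  if cyc then rcons c (head x0 c) else c.

Definition tour_weight (cyc : bool) (c : seq T) : nat :=
  seq_weight (closed_tour cyc c).

Lemma walk_weight_cons x y s : walk_weight x (y :: s) = w x y + walk_weight y s.
Proof. by []. Qed.

Lemma walk_weight_cat x s1 s2 :
  walk_weight x (s1 ++ s2) = walk_weight x s1 + walk_weight (last x s1) s2.
Proof. by rewrite /walk_weight pairmap_cat sumn_cat. Qed.

Lemma walk_weight_rcons x s y :
  walk_weight x (rcons s y) = walk_weight x s + w (last x s) y.
Proof. by rewrite -cats1 walk_weight_cat walk_weight_cons addn0. Qed.

Hypothesis w_sym : forall a b, w a b = w b a.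

Lemma walk_weight_rev x s :
  walk_weight (last x s) (rev (belast x s)) = walk_weight x s.
Proof.
elim: s x => [|y s IHs] x //=.
by rewrite rev_cons walk_weight_rcons IHs last_rev_belast walk_weight_cons w_sym addnC.
Qed.

Lemma walk_weight_reverse_lt x A b B y D :
  w (last x A) (last b B) + w b y < w (last x A) b + w (last b B) y ->
  walk_weight x (A ++ rev (b :: B) ++ y :: D) <
  walk_weight x (A ++ b :: B ++ y :: D).
Proof.
move=> improving_exchange; rewrite !walk_weight_cat.
have -> : last (last x A) (rev (b :: B)) = b by rewrite rev_cons last_rcons.
have -> : walk_weight (last x A) (rev (b :: B)) =
          w (last x A) (last b B) + walk_weight b B.
  by rewrite [b :: B]lastI rev_rcons walk_weight_cons walk_weight_rev.
by rewrite !walk_weight_cons walk_weight_cat walk_weight_cons; lia.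
Qed.

Lemma two_opt_move_shape s k j : k < j -> j.+1 < size s ->
  exists x A b B y D,
  s = x :: A ++ b :: B ++ y :: D /\
  [/\ two_opt_move s k j = x :: A ++ rev (b :: B) ++ y :: D,
      nth x0 s k = last x A, nth x0 s k.+1 = b,
      nth x0 s j = last b B & nth x0 s j.+1 = y].
Proof.
move=> ltkj ltjs.
have sizeA : size (take k.+1 s) = k.+1 by rewrite size_takel //; lia.
have sizeB : size (take (j - k) (drop k.+1 s)) = j - k.
  by rewrite size_takel // size_drop; lia.
have sizeD : size (drop j.+1 s) = size s - j.+1 by rewrite size_drop.
have split_s : s = take k.+1 s ++ take (j - k) (drop k.+1 s) ++ drop j.+1 s.
  have -> : drop j.+1 s = drop (j - k) (drop k.+1 s) by rewrite drop_drop; congr drop; lia.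
  by rewrite !cat_take_drop.
have [x [A eqA]] : exists x A, take k.+1 s = x :: A.
  by case: (take k.+1 s) sizeA => [|x A] /= => [|_]; [lia | exists x, A].
have [b [B eqB]] : exists b B, take (j - k) (drop k.+1 s) = b :: B.
  by case: (take _ _) sizeB => [|b B] /= => [|_]; [lia | exists b, B].
have [y [D eqD]] : exists y D, drop j.+1 s = y :: D.
  by case: (drop j.+1 s) sizeD => [|y D] /= => [|_]; [lia | exists y, D].
have s_eq : s = x :: A ++ b :: B ++ y :: D by rewrite -!cat_cons -eqA -eqB -eqD.
rewrite eqA eqB /= in sizeA sizeB; case: sizeA => sizeA.
exists x, A, b, B, y, D; rewrite /two_opt_move eqA eqB eqD {}s_eq.
have -> : j = (size A + size B).+1 by lia.
rewrite -sizeA; split=> //; split=> //.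
- by rewrite -cat_cons nth_cat ltnSn (nth_last x0 (x :: A)).
- by rewrite /= nth_cat ltnn subnn.
- rewrite /= nth_cat ltnNge leq_addr /= addKn -cat_cons nth_cat ltnSn.
  exact: (nth_last x0 (b :: B)).
- by rewrite /= -addnS nth_cat ltnNge leq_addr /= addKn -cat_cons nth_cat ltnn subnn.
Qed.

Lemma seq_weight_two_opt_move_lt s k j : k < j -> j.+1 < size s ->
  w (nth x0 s k) (nth x0 s j) + w (nth x0 s k.+1) (nth x0 s j.+1) <
  w (nth x0 s k) (nth x0 s k.+1) + w (nth x0 s j) (nth x0 s j.+1) ->
  seq_weight (two_opt_move s k j) < seq_weight s.
Proof.
move=> ltkj ltjs.
have [x [A [b [B [y [D [ -> [ -> -> -> -> -> ]]]]]]]] := two_opt_move_shape ltkj ltjs.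
exact: walk_weight_reverse_lt.
Qed.

Lemma size_closed_tour cyc c : size (closed_tour cyc c) = size c + cyc.
Proof. by case: cyc; rewrite /= ?size_rcons ?addn1 ?addn0. Qed.

Lemma nth_closed_tour cyc c i :
  i < size c -> nth x0 (closed_tour cyc c) i = nth x0 c i.
Proof. by case: cyc => //= lt_ic; rewrite nth_rcons lt_ic. Qed.

Lemma nth_succ_idx cyc c j : j < size c ->
  nth x0 c (succ_idx cyc c j) = nth x0 (closed_tour cyc c) j.+1.
Proof.
case: cyc => //= ltjc; rewrite nth_rcons.
have [ltj1c | ] := ltnP j.+1 (size c); first by rewrite modn_small.
move=> lecj1; have -> : j.+1 = size c by apply/eqP; rewrite eqn_leq ltjc.
by rewrite modnn eqxx nth0.
Qed.

Lemma closed_tour_two_opt_move cyc c k j : k < j < size c ->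
  closed_tour cyc (two_opt_move c k j) = two_opt_move (closed_tour cyc c) k j.
Proof.
case: cyc => //= ltkjc; rewrite two_opt_move_rcons //.
by case: c ltkjc => [/andP[_ //] | x c].
Qed.

Lemma tour_weight_improving_move_lt cyc c p :
  p \in edge_pairs (nedges cyc c) -> improving w x0 cyc c p ->
  tour_weight cyc (two_opt_move c p.1 p.2) < tour_weight cyc c.
Proof.
case: p => k j p_in; have /andP[ltkj ltjE] := mem_edge_pairs p_in.
have /andP[_ ltjc] := edge_pair_lt_size p_in.
have ltkc : k < size c by apply: ltn_trans ltjc.
have ltk1c : k.+1 < size c by apply: leq_ltn_trans ltjc.
rewrite /improving /tour_weight closed_tour_two_opt_move ?ltkj //= nth_succ_idx //.
rewrite -(nth_closed_tour cyc ltkc) -(nth_closed_tour cyc ltk1c).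
rewrite -(nth_closed_tour cyc ltjc) => improve.
apply: seq_weight_two_opt_move_lt => //.
by rewrite size_closed_tour; move: ltjE; rewrite /nedges; case: (cyc) => /=; lia.
Qed.

Variable B : nat.
Hypothesis w_le : forall a b, w a b <= B.

Lemma walk_weight_le x s : walk_weight x s <= size s * B.
Proof. by elim: s x => [|y s IHs] x //=; rewrite walk_weight_cons mulSn leq_add. Qed.

Lemma tour_weight_le cyc c : tour_weight cyc c <= size c * B.
Proof.
apply: leq_trans (walk_weight_le _ _) _; apply: leq_mul => //.
by rewrite size_behead size_closed_tour; case: cyc => /=; lia.
Qed.

Lemma two_opt_run_cost_le cyc fuel c : tour_weight cyc c < fuel ->
  exists cost, two_opt_run w x0 cyc fuel c = Some cost /\
    cost <= (tour_weight cyc c).+1 * (size (edge_pairs (nedges cyc c))).+1.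
Proof.
elim: fuel c => [|fuel IHfuel] c // lt_fuel /=.
set ps := edge_pairs _; set i := find _ _.
case: ifPn => lt_i; last by exists (size ps); split=> //; lia.
set p := nth (0, 0) ps i.
have p_in : p \in ps by apply: mem_nth.
have p_improving : improving w x0 cyc c p by apply: nth_find; rewrite has_find.
have lt_weight := tour_weight_improving_move_lt p_in p_improving.
have [cost [-> le_cost]] := IHfuel _ (leq_trans lt_weight lt_fuel).
have /andP[ltkj ltjc] := edge_pair_lt_size p_in.
rewrite /nedges size_two_opt_move ?ltkj // -/(nedges cyc c) -/ps in le_cost.
exists (i.+2 + cost); split=> //.
have := leq_mul lt_weight (leqnn (size ps).+1); lia.
Qed.

Lemma two_opt_run_le cyc c :
  exists cost, two_opt_run w x0 cyc (size c * B).+1 c = Some cost /\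
    cost <= (size c * B).+1 * (size c * size c).+1.
Proof.
have le_weight : tour_weight cyc c < (size c * B).+1 by rewrite ltnS tour_weight_le.
have [cost [run le_cost]] := two_opt_run_cost_le le_weight.
exists cost; split=> //; apply: leq_trans le_cost _.
by rewrite leq_mul // ltnS (leq_trans (size_edge_pairs _)) // leq_mul ?nedges_le_size.
Qed.

End TwoOptWeight.

Lemma dist_le n (e : rel 'I_n) u v : dist e u v <= n.+1.
Proof. by rewrite /dist (leq_trans (find_size _ _)) ?size_iota. Qed.

Lemma dist_sym n (e : rel 'I_n) : symmetric e -> forall u v, dist e u v = dist e v u.
Proof.
move=> e_sym.
suff walk_rev u v k :
    [exists p : k.-tuple 'I_n, path e u p && (last u p == v)] ->
    [exists p : k.-tuple 'I_n, path e v p && (last v p == u)].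
  by move=> u v; apply: eq_find => k; apply/idP/idP; apply: walk_rev.
case/existsP => p /andP[e_path /eqP <-]; apply/existsP.
have size_rev_p : size (rev (belast u p)) == k.
  by rewrite size_rev size_belast size_tuple.
exists (Tuple size_rev_p) => /=; rewrite rev_path.
rewrite (eq_path (e' := e)) => [|a b]; last by rewrite /= e_sym.
by rewrite e_path last_rev_belast eqxx.
Qed.

Lemma two_opt_run_dist_le n (e : rel 'I_n) x0 cyc c :
  0 < n -> symmetric e -> size c = n ->
  exists cost, two_opt_run (dist e) x0 cyc (n * n.+1).+1 c = Some cost /\
    n + cost <= 7 * n ^ 4.
Proof.
move=> n_gt0 e_sym size_c.
have [cost [run le_cost]] := two_opt_run_le x0 (dist_sym e_sym) (@dist_le n e) cyc c.
rewrite size_c in run le_cost; exists cost; split=> //.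
nia.
Qed.

Lemma size_start_path n (s : 'I_n) : size (s :: [seq v <- enum 'I_n | v != s]) = n.
Proof.
rewrite /= -rem_filter ?enum_uniq // size_rem ?mem_enum // size_enum_ord.
by rewrite prednK // (leq_ltn_trans _ (ltn_ord s)).
Qed.

Lemma foldr_option_sum_le (I : Type) (f : I -> option nat) M (l : seq I) :
  (forall i, exists a, f i = Some a /\ a <= M) ->
  exists cost, foldr (fun i acc => match f i, acc with
                                   | Some a, Some b => Some (a + b)
                                   | _, _ => None
                                   end) (Some 0) l = Some cost /\
               cost <= size l * M.
Proof.
move=> f_le; elim: l => [|i l [cost [fold_l le_cost]]] /=; first by exists 0.
have [a [-> le_a]] := f_le i; rewrite fold_l; exists (a + cost); split=> //.
by rewrite mulSn leq_add.
Qed.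

Lemma two_opt_cycle_cost_le n (e : rel 'I_n) x0 : 0 < n -> symmetric e ->
  exists cost, two_opt_cycle_cost e x0 (n * n.+1).+1 = Some cost /\
    cost <= 7 * n ^ 4.
Proof.
move=> n_gt0 e_sym.
have [cost [run le_cost]] := two_opt_run_dist_le x0 true n_gt0 e_sym (size_enum_ord n).
by exists (n + cost); rewrite /two_opt_cycle_cost run.
Qed.

Lemma two_opt_path_cost_le n (e : rel 'I_n) x0 s : 0 < n -> symmetric e ->
  exists cost, two_opt_path_cost e x0 s (n * n.+1).+1 = Some cost /\
    cost <= 7 * n ^ 4.
Proof.
move=> n_gt0 e_sym.
have [cost [run le_cost]] := two_opt_run_dist_le x0 false n_gt0 e_sym (size_start_path s).
by exists (n + cost); rewrite /two_opt_path_cost run.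
Qed.

Lemma two_opt_path_all_cost_le n (e : rel 'I_n) x0 : 0 < n -> symmetric e ->
  exists cost, two_opt_path_all_cost e x0 (n * n.+1).+1 = Some cost /\
    cost <= 7 * n ^ 5.
Proof.
move=> n_gt0 e_sym.
have [cost [sum le_cost]] := foldr_option_sum_le (enum 'I_n)
  (fun s => two_opt_path_cost_le x0 s n_gt0 e_sym).
by exists cost; split=> //; rewrite expnS mulnCA -[n in n * _]size_enum_ord.
Qed.

Theorem theorem2 :
  (exists C : nat, forall (n : nat) (hn : 0 < n) (e : rel 'I_n),
     simple_graph e -> connected_graph e ->
     exists fuel cost, two_opt_cycle_cost e (Ordinal hn) fuel = Some cost
                       /\ cost <= C * n ^ 4) /\
  (exists C : nat, forall (n : nat) (hn : 0 < n) (e : rel 'I_n) (s : 'I_n),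
     simple_graph e -> connected_graph e ->
     exists fuel cost, two_opt_path_cost e (Ordinal hn) s fuel = Some cost
                       /\ cost <= C * n ^ 4) /\
  (exists C : nat, forall (n : nat) (hn : 0 < n) (e : rel 'I_n),
     simple_graph e -> connected_graph e ->
     exists fuel cost, two_opt_path_all_cost e (Ordinal hn) fuel = Some cost
                       /\ cost <= C * n ^ 5).
Proof.
split; [|split]; exists 7.
- move=> n n_gt0 e [e_sym _] _; exists (n * n.+1).+1.
  exact: two_opt_cycle_cost_le.
- move=> n n_gt0 e s [e_sym _] _; exists (n * n.+1).+1.
  exact: two_opt_path_cost_le.
- move=> n n_gt0 e [e_sym _] _; exists (n * n.+1).+1.
  exact: two_opt_path_all_cost_le.
Qed.
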